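(* For every integer $n\geq 1$, $$c_n(231,2143 : 231)=c_n(312,2143 : 312)=\begin{cases}\frac{4k^3+3k^2-k}{6}+1 & \text{if } n=2k,\\ \frac{4k^3+9k^2+5k}{6}+1 & \text{if } n=2k+1.\end{cases}$$
   Context: $S_n$ is the symmetric group on $[n]=\{1,\dots,n\}$, and a permutation $\pi\in S_n$ is written in one-line notation $\pi=\pi_1\pi_2\cdots\pi_n$ with $\pi_i=\pi(i)$. For $\tau\in S_k$, $k\le n$, $\pi$ contains $\tau$ if there are indices $i_1<\dots<i_k$ with $\pi_{i_s}>\pi_{i_t}$ iff $\tau_s>\tau_t$ for all $1\le s<t\le k$; otherwise $\pi$ avoids $\tau$. $\pi^2$ denotes the composition $\pi\circ\pi$. For patterns $\sigma_1,\sigma_2,\rho$, $c_n(\sigma_1,\sigma_2 : \rho)$ denotes the number of permutations $\pi\in S_n$ such that $\pi$ avoids both $\sigma_1$ and $\sigma_2$ and $\pi^2$ avoids $\rho$. *)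

From mathcomp Require Import all_boot all_order all_fingroup.
Set Implicit Arguments. Unset Strict Implicit. Unset Printing Implicit Defensive.

(* Permutations of [n] are represented as 'S_n (permutations of 'I_n = {0..n-1});
   the one-line value pi_i (1-based) is (pi (i-1)) + 1, order-isomorphic.
   A pattern tau is given in one-line notation as a list of naturals
   tau_1 ... tau_k (1-based, as in the paper). *)

Definition contains (n : nat) (pi : 'S_n) (tau : seq nat) : bool :=
  [exists idx : {ffun 'I_(size tau) -> 'I_n},
    [forall s : 'I_(size tau), forall t : 'I_(size tau), (s < t) ==>
       ((idx s < idx t) &&
        ((pi (idx s) > pi (idx t)) == (nth 0 tau s > nth 0 tau t)))]].

Definition avoids (n : nat) (pi : 'S_n) (tau : seq nat) : bool :=
  ~~ contains pi tau.

(* c_n(sigma1, sigma2 : rho): number of pi in S_n avoiding sigma1 and sigma2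
   with pi^2 = pi o pi avoiding rho. *)
Definition c_count (n : nat) (sigma1 sigma2 rho : seq nat) : nat :=
  #|[set pi : 'S_n | [&& avoids pi sigma1, avoids pi sigma2 & avoids (pi * pi)%g rho]]|.

From mathcomp Require Import all_boot all_order all_fingroup.
From mathcomp Require Import zify.
Set Implicit Arguments. Unset Strict Implicit. Unset Printing Implicit Defensive.

(* Let F be such a permutation of {0, ..., N-1}, not the identity, a its first
   moved point, M = F a > a and r = F^-1 a. Avoiding 231 makes the block
   [a, M] F-stable; avoiding 2143 as well (with the positions a, r) makes F
   the identity beyond M. Inside the block F decreases down to r. As
   F^2 r = F a = M is the maximum of the block, 231-avoidance of F^2 separates
   the values of F^2 on either side of r, which forces the values of F on
   (r, M] to be the smallest ones, in increasing order: the block reads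
   M, M-1, ..., a+e+1, a, a+1, ..., a+e with e = M - r, and a + 2e < M since
   the value r is taken before position r. Conversely each such permutation
   qualifies, so c_n = 1 + #{(a, e, M) | a + 2e < M < n}, a cubic in n. The
   312 version follows by inversion. *)

Definition avoids231_on N (F : nat -> nat) := forall i j k,
  i < j -> j < k -> k < N -> F k < F i -> F i < F j -> False.

Definition avoids2143_on N (F : nat -> nat) := forall i j k l,
  i < j -> j < k -> k < l -> l < N -> F j < F i -> F i < F l -> F l < F k -> False.

Lemma eq_avoids231_on N (F G : nat -> nat) :
  (forall i, i < N -> F i = G i) -> avoids231_on N G -> avoids231_on N F.
Proof.
move=> eFG H i j k ij jk kN; rewrite !eFG; try lia; exact: H ij jk kN.
Qed.

Lemma eq_avoids2143_on N (F G : nat -> nat) :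
  (forall i, i < N -> F i = G i) -> avoids2143_on N G -> avoids2143_on N F.
Proof.
move=> eFG H i j k l ij jk kl lN; rewrite !eFG; try lia; exact: H ij jk kl lN.
Qed.

Lemma leq_size_inj_in (f : nat -> nat) (s t : seq nat) :
  uniq s -> {in s &, injective f} -> (forall x, x \in s -> f x \in t) ->
  size s <= size t.
Proof.
move=> us fi st; rewrite -(size_map f); apply: uniq_leq_size.
  by rewrite map_inj_in_uniq.
by move=> _ /mapP [x xs ->]; apply: st.
Qed.

Section IncreasingOnInterval.
Variables (f : nat -> nat) (m n m' : nat).
Hypothesis f_incr : forall i j, m <= i -> i < j -> j < n -> f i < f j.
Hypothesis f_range : forall i, m <= i -> i < n -> m' <= f i < m' + (n - m).

Lemma increasing_shift i t : m <= i -> i + t < n -> f i + t <= f (i + t).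
Proof.
move=> mi; elim: t => [|t IH] itn; first by rewrite !addn0.
have := @f_incr (i + t) (i + t.+1) ltac:(lia) ltac:(lia) itn.
by have := IH ltac:(lia); lia.
Qed.

Lemma increasing_interval_translation i : m <= i -> i < n -> f i = m' + (i - m).
Proof.
move=> mi iN; have := @increasing_shift i (n.-1 - i) mi ltac:(lia).
have := @increasing_shift m (i - m) (leqnn m) ltac:(lia).
rewrite subnKC // (_ : i + _ = n.-1); last by lia.
have := @f_range m (leqnn m) ltac:(lia).
by have := @f_range n.-1 ltac:(lia) ltac:(lia); lia.
Qed.
End IncreasingOnInterval.

(* On [a, M] the one-line notation of [vshape a e M] is
   M, M-1, ..., a+e+1, a, a+1, ..., a+e; it is the identity elsewhere. *)
Definition vshape (a e M i : nat) : nat :=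
  if i < a then i else if i < M - e then M + a - i
  else if i <= M then a + i - (M - e) else i.

(* The square of [vshape a e M] reverses [a, a+e] and [M-e, M]. *)
Definition vshape_sq (a e M i : nat) : nat :=
  if i < a then i else if i <= a + e then a + e + a - i else if i < M - e then i
  else if i <= M then M + (M - e) - i else i.

Section VShape.
Variables (a e M : nat).
Hypothesis adm : a + e.*2 < M.

Local Notation f := (vshape a e M).

Lemma vshape_id_lt i : i < a -> f i = i.
Proof. by rewrite /vshape => ->. Qed.

Lemma vshape_dec i : a <= i -> i < M - e -> f i = M + a - i.
Proof. by move=> *; rewrite /vshape; do ! case: ifP => ?; lia. Qed.

Lemma vshape_inc i : M - e <= i -> i <= M -> f i = a + i - (M - e).
Proof. by move=> *; rewrite /vshape; do ! case: ifP => ?; lia. Qed.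

Lemma vshape_id_gt i : M < i -> f i = i.
Proof. by move=> *; rewrite /vshape; do ! case: ifP => ?; lia. Qed.

Lemma vshape_sqE i : f (f i) = vshape_sq a e M i.
Proof.
rewrite /vshape_sq; case: (ltnP i a) => [ia | ai]; first by rewrite !vshape_id_lt.
case: (leqP i (a + e)) => [ie | ei].
  by rewrite (vshape_dec ai) ?vshape_inc; lia.
case: (ltnP i (M - e)) => [iMe | Mei].
  by rewrite (vshape_dec ai) // vshape_dec; lia.
case: (leqP i M) => [iM | Mi]; last by rewrite !vshape_id_gt.
by rewrite (vshape_inc Mei iM) vshape_dec; lia.
Qed.

Variable N : nat.
Hypothesis M_lt_N : M < N.

Lemma vshape_lt i : i < N -> f i < N.
Proof. by move=> iN; rewrite /vshape; do ! case: ifP => ?; lia. Qed.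

Lemma vshape_inj i j : i < N -> j < N -> f i = f j -> i = j.
Proof. by move=> iN jN; rewrite /vshape; do ! case: ifP => ?; lia. Qed.

Lemma vshape_avoids231 : avoids231_on N f.
Proof. by move=> i j k ? ? ?; rewrite /vshape; do ! case: ifP => ?; lia. Qed.

Lemma vshape_avoids2143 : avoids2143_on N f.
Proof. by move=> i j k l ? ? ? ?; rewrite /vshape; do ! case: ifP => ?; lia. Qed.

Lemma vshape_sq_avoids231 : avoids231_on N (fun i => f (f i)).
Proof. by move=> i j k ? ? ?; rewrite !vshape_sqE /vshape_sq; do ! case: ifP => ?; lia. Qed.

End VShape.

Section AvoiderShape.
Variables (N : nat) (F : nat -> nat).
Hypothesis F_lt : forall x, x < N -> F x < N.
Hypothesis F_inj : forall x y, x < N -> y < N -> F x = F y -> x = y.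
Hypothesis F_surj : forall v, v < N -> exists2 x, x < N & F x = v.
Hypothesis F_231 : avoids231_on N F.
Hypothesis F_2143 : avoids2143_on N F.
Hypothesis F2_231 : avoids231_on N (fun i => F (F i)).

Variables (a M r : nat).
Hypothesis a_lt_N : a < N.
Hypothesis F_fix_lt_a : forall i, i < a -> F i = i.
Hypothesis Fa_neq_a : F a != a.
Hypothesis Fa_eq_M : F a = M.
Hypothesis r_lt_N : r < N.
Hypothesis Fr_eq_a : F r = a.

Local Notation F2 i := (F (F i)).

Lemma F_neq x y : x < N -> y < N -> x != y -> F x != F y.
Proof. by move=> xN yN; apply: contra => /eqP /F_inj-> //. Qed.

Lemma ltF_by_contra x y : x < N -> y < N -> x != y -> (F y < F x -> False) ->
  F x < F y.
Proof.
move=> xN yN xy H; case: (ltngtP (F x) (F y)) => // e.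
by move: xy; rewrite (F_inj xN yN e) eqxx.
Qed.

Lemma image_ge_a x : a <= x -> x < N -> a <= F x.
Proof.
move=> ax xN; rewrite leqNgt; apply/negP => Fxa.
have := F_inj (F_lt xN) xN (F_fix_lt_a Fxa); lia.
Qed.

Lemma a_lt_M : a < M.
Proof. by have := image_ge_a (leqnn a) a_lt_N; move: Fa_neq_a; rewrite Fa_eq_M; lia. Qed.

Lemma M_lt_N : M < N.
Proof. by rewrite -Fa_eq_M F_lt. Qed.

(* If F x > M for some x in (a, M], then by 231-avoidance (with the pattern
   a, x, q) all of [x, N) is mapped into (M, N), which is too small. *)
Lemma block_image_le x : a <= x <= M -> F x <= M.
Proof.
move=> /andP [ax xM]; have xN : x < N by have := M_lt_N; lia.
rewrite leqNgt; apply/negP => MFx.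
have ax' : a < x by rewrite ltn_neqAle ax andbT; apply: contraTneq MFx => <-; lia.
have above : forall q, x <= q -> q < N -> M < F q.
  move=> q; rewrite leq_eqVlt => /orP [/eqP <- // | xq] qN.
  rewrite ltnNge; apply/negP => FqM.
  have Fq_neq : F q != M by rewrite -Fa_eq_M F_neq //; lia.
  by apply: (F_231 ax' xq qN); rewrite Fa_eq_M; lia.
suff : size (iota x (N - x)) <= size (iota M.+1 (N - M.+1)).
  by rewrite !size_iota; have := M_lt_N; lia.
apply: (@leq_size_inj_in F); first exact: iota_uniq.
  by move=> u v; rewrite !mem_iota => hu hv; apply: F_inj; lia.
move=> u; rewrite !mem_iota => hu.
by have := above u ltac:(lia) ltac:(lia); have := F_lt (x := u) ltac:(lia); lia.
Qed.

Lemma block_stable x : a <= x <= M -> a <= F x <= M.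
Proof.
move=> xB; rewrite block_image_le // andbT; apply: image_ge_a; have := M_lt_N; lia.
Qed.

Lemma beyond_block_image_gt q : M < q -> q < N -> M < F q.
Proof.
move=> Mq qN; rewrite ltnNge; apply/negP => FqM.
have aq : a <= q by have := a_lt_M; lia.
suff : size (q :: iota a (M.+1 - a)) <= size (iota a (M.+1 - a)).
  by rewrite /= !size_iota; lia.
have inN u : u \in q :: iota a (M.+1 - a) -> u < N.
  by rewrite inE mem_iota => /orP [/eqP -> // | ]; have := M_lt_N; lia.
apply: (@leq_size_inj_in F).
- by rewrite /= iota_uniq andbT mem_iota; lia.
- by move=> u v /inN uN /inN vN; apply: F_inj.
- move=> u; rewrite inE !mem_iota => /orP [/eqP -> | uB].
  + by have := image_ge_a aq qN; lia.
  + by have := block_stable (x := u) ltac:(lia); lia.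
Qed.

Lemma a_lt_r : a < r.
Proof.
rewrite ltn_neqAle; apply/andP; split.
  by apply: contra Fa_neq_a => /eqP {1}->; rewrite Fr_eq_a.
by rewrite leqNgt; apply/negP => ra; have := F_fix_lt_a ra; rewrite Fr_eq_a; lia.
Qed.

Lemma r_le_M : r <= M.
Proof.
rewrite leqNgt; apply/negP => Mr.
by have := beyond_block_image_gt Mr r_lt_N; rewrite Fr_eq_a; have := a_lt_M; lia.
Qed.

(* A descent beyond M would complete a 2143 pattern with the positions a, r. *)
Lemma beyond_block_increasing q1 q2 : M < q1 -> q1 < q2 -> q2 < N -> F q1 < F q2.
Proof.
move=> Mq1 q12 q2N; apply: ltF_by_contra; try lia; move=> F21.
have MFq2 := beyond_block_image_gt (q := q2) ltac:(lia) q2N.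
have ar := a_lt_r; have rM := r_le_M; have aM := a_lt_M.
apply: (F_2143 (i := a) (j := r) (k := q1) (l := q2));
  by rewrite ?Fr_eq_a ?Fa_eq_M; lia.
Qed.

Lemma beyond_block_fixed q : M < q -> q < N -> F q = q.
Proof.
move=> Mq qN; rewrite (@increasing_interval_translation F M.+1 N M.+1) //; try lia.
  by move=> i j Mi ij jN; apply: beyond_block_increasing.
by move=> i Mi iN; have := F_lt iN; have := beyond_block_image_gt Mi iN; lia.
Qed.

Lemma F2_inj x y : x < N -> y < N -> F2 x = F2 y -> x = y.
Proof. by move=> xN yN e; apply: F_inj xN yN (F_inj (F_lt xN) (F_lt yN) e). Qed.

Lemma block_stable2 x : a <= x <= M -> a <= F2 x <= M.
Proof. by move=> xB; apply/block_stable/block_stable. Qed.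

Lemma F2_lt_M x : a <= x <= M -> x != r -> F2 x < M.
Proof.
move=> xB xr; have xN : x < N by have := M_lt_N; lia.
have : F2 x != F2 r by apply: contra xr => /eqP /(F2_inj xN r_lt_N) ->.
by rewrite Fr_eq_a Fa_eq_M; have := block_stable2 xB; lia.
Qed.

(* F2 r = F a = M is the largest value on the block, so a descent of F2
   across r would be a 231 pattern of F2. *)
Lemma F2_lo_lt_hi i k : a <= i < r -> r < k <= M -> F2 i < F2 k.
Proof.
move=> iL kH; have MN := M_lt_N; have rM := r_le_M.
have F2i := F2_lt_M (x := i) ltac:(lia) ltac:(lia).
have : F2 i != F2 k by apply: F_neq; rewrite ?F_lt ?F_neq //; lia.
have := F2_231 (i := i) (j := r) (k := k); rewrite Fr_eq_a Fa_eq_M; lia.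
Qed.

Lemma F2_lo_lt_r i : a <= i < r -> F2 i < r.
Proof.
move=> iL; have MN := M_lt_N; have rM := r_le_M.
rewrite ltnNge; apply/negP => rF2i.
suff : size (i :: iota r.+1 (M - r)) <= size (iota r (M - r)).
  by rewrite /= !size_iota; lia.
apply: (@leq_size_inj_in (fun x => F2 x)).
- by rewrite /= iota_uniq andbT mem_iota; lia.
- by move=> u v; rewrite !inE !mem_iota => hu hv; apply: F2_inj; lia.
- move=> u; rewrite inE !mem_iota => /orP [/eqP -> | uH].
  + by have := F2_lt_M (x := i) ltac:(lia) ltac:(lia); lia.
  + have := F2_lt_M (x := u) ltac:(lia) ltac:(lia).
    by have := F2_lo_lt_hi (i := i) (k := u) ltac:(lia) ltac:(lia); lia.
Qed.

Lemma F2_hi_ge_r k : r < k <= M -> r <= F2 k.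
Proof.
move=> kH; have MN := M_lt_N; have ar := a_lt_r.
rewrite leqNgt; apply/negP => F2kr.
suff : size (k :: iota a (r - a)) <= size (iota a (r - a)).
  by rewrite /= !size_iota; lia.
apply: (@leq_size_inj_in (fun x => F2 x)).
- by rewrite /= iota_uniq andbT mem_iota; lia.
- by move=> u v; rewrite !inE !mem_iota => hu hv; apply: F2_inj; lia.
- move=> u; rewrite inE !mem_iota => /orP [/eqP -> | uL].
  + by have := block_stable2 (x := k) ltac:(lia); lia.
  + have := block_stable2 (x := u) ltac:(lia).
    by have := F2_lo_lt_hi (i := u) (k := k) ltac:(lia) ltac:(lia); lia.
Qed.

(* F r = a is the least value on the block, so an ascent before r is a 231. *)
Lemma decreasing_to_r i j : a <= i -> i < j -> j <= r -> F j < F i.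
Proof.
move=> ai ij jr; have MN := M_lt_N; have rM := r_le_M.
have FiB := block_stable (x := i) ltac:(lia).
have : F i != F r by apply: F_neq; lia.
rewrite Fr_eq_a => Fi_neq_a.
case: (ltngtP j r) jr => // [jr _ | -> _]; last by rewrite Fr_eq_a; lia.
apply: ltF_by_contra; try lia; move=> FiFj.
by apply: (F_231 ij jr r_lt_N); rewrite ?Fr_eq_a; lia.
Qed.

(* A descent after k is a 231 pattern at r.-1, k, l or a 2143 pattern at
   r.-1, r, k, l. *)
Lemma hi_increasing_above_pred_r k l : r < k -> k < l -> l <= M ->
  F r.-1 < F k -> F k < F l.
Proof.
move=> rk kl lM Fpk; have MN := M_lt_N; have ar := a_lt_r.
have Fpl : F r.-1 < F l.
  apply: ltF_by_contra; try lia; move=> Flp.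
  by apply: (F_231 (i := r.-1) (j := k) (k := l)); lia.
apply: ltF_by_contra; try lia; move=> Flk.
have := block_stable (x := r.-1) ltac:(lia).
have : F r.-1 != F r by apply: F_neq; lia.
rewrite Fr_eq_a => *.
by apply: (F_2143 (i := r.-1) (j := r) (k := k) (l := l)); rewrite ?Fr_eq_a; lia.
Qed.

(* Otherwise F increases from k on, so F M exceeds F k1 for r < k1 < M.
   If F M < r, F decreases on [F r.-1, F M] and F2 M < F2 r.-1 < r <= F2 M;
   if F M > r, then F2 M < F M = F2 a, against [F2_lo_lt_hi]. *)
Lemma hi_lt_pred_r k : r < k -> k <= M -> F k < F r.-1.
Proof.
move=> rk kM; have MN := M_lt_N; have ar := a_lt_r.
apply: ltF_by_contra; try lia; move=> Fpk.
have FkM : F k <= F M.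
  case: (ltngtP k M) kM => // [kM _ | -> //].
  exact: ltnW (hi_increasing_above_pred_r rk kM _ Fpk).
have below_FM k1 : r < k1 -> k1 < M -> F k1 < F M.
  move=> rk1 k1M; case: (ltngtP (F r.-1) (F k1)) => [Fpk1 | Fk1p | /F_inj e].
  - exact: hi_increasing_above_pred_r.
  - lia.
  - by have := e ltac:(lia) ltac:(lia); lia.
have FM_neq_r : F M != r.
  by apply/eqP => FMr; have := F2_hi_ge_r (k := M) ltac:(lia); rewrite FMr Fr_eq_a; lia.
have FM_neq_M : F M != M by rewrite -{2}Fa_eq_M F_neq; lia.
have FMB := block_stable (x := M) ltac:(lia).
case: (ltngtP (F M) r) FM_neq_r => // [FMr | rFM] _.
- have FpB := block_stable (x := r.-1) ltac:(lia).
  have := decreasing_to_r (i := F r.-1) (j := F M) ltac:(lia) ltac:(lia) ltac:(lia).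
  have := F2_hi_ge_r (k := M) ltac:(lia).
  by have := F2_lo_lt_r (i := r.-1) ltac:(lia); lia.
- have := below_FM (F M) rFM ltac:(lia).
  by have := F2_lo_lt_hi (i := a) (k := M) ltac:(lia) ltac:(lia); rewrite Fa_eq_M; lia.
Qed.

(* Induction on t: the value M - t.+1 must have a preimage, and every
   position other than a + t.+1 is excluded by the monotonicity facts. *)
Lemma lo_shape_shift t : a + t < r -> F (a + t) = M - t.
Proof.
have MN := M_lt_N; have ar := a_lt_r; have rM := r_le_M.
elim: t => [|t IH] atr; first by rewrite addn0 subn0 Fa_eq_M.
have {}IH := IH ltac:(lia).
have := decreasing_to_r (i := a + t) (j := a + t.+1) ltac:(lia) ltac:(lia) ltac:(lia).
rewrite IH => Fdec.
case: (ltngtP (F (a + t.+1)) (M - t.+1)) => // [Flt | ]; last by lia.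
have [x xN Fx] := F_surj (v := M - t.+1) ltac:(lia).
have FB := block_stable (x := a + t.+1) ltac:(lia).
exfalso; case: (ltnP x a) => [xa | ax].
  by have := F_fix_lt_a xa; lia.
case: (ltnP M x) => [Mx | xM].
  by have := beyond_block_image_gt Mx xN; lia.
case: (ltnP (a + t) x) => [tx | xt].
  case: (ltnP r x) => [rx | xr].
    have Fp_le : F r.-1 <= F (a + t.+1).
      have [tp | pt] := ltnP (a + t.+1) r.-1.
        by apply: ltnW; apply: decreasing_to_r; lia.
      by rewrite (_ : a + t.+1 = r.-1) //; lia.
    by have := hi_lt_pred_r rx xM; lia.
  case: (ltngtP x (a + t.+1)) => [| tx' | e]; first lia.
    by have := decreasing_to_r (i := a + t.+1) (j := x) ltac:(lia) tx' xr; lia.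
  by move: Fx; rewrite e; lia.
case: (ltngtP x (a + t)) xt => // [xt _ | e _]; last by move: Fx; rewrite e IH; lia.
by have := decreasing_to_r (i := x) (j := a + t) ax xt ltac:(lia); lia.
Qed.

Lemma lo_shape x : a <= x < r -> F x = M + a - x.
Proof.
move=> xL; have := lo_shape_shift (t := x - a) ltac:(lia).
by rewrite subnKC; have := a_lt_M; lia.
Qed.

(* By [F2_hi_ge_r] the value r is taken on [a, r), where F x = M + a - x. *)
Lemma lo_longer_than_hi : M + a < r.*2.
Proof.
have MN := M_lt_N; have ar := a_lt_r; have rM := r_le_M.
rewrite ltnNge; apply/negP => short.
have [x xN Fx] := F_surj r_lt_N.
case: (ltnP x a) => [xa | ax]; first by have := F_fix_lt_a xa; lia.
case: (ltnP M x) => [Mx | xM]; first by have := beyond_block_image_gt Mx xN; lia.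
case: (ltnP x r) => [xr | rx]; first by have := lo_shape (x := x) ltac:(lia); lia.
case: (ltngtP x r) rx => // [rx _ | e _]; last by move: Fx; rewrite e Fr_eq_a; lia.
by have := F2_hi_ge_r (k := x) ltac:(lia); rewrite Fx Fr_eq_a; lia.
Qed.

(* By [lo_shape] the values r, ..., M sit at positions a + (M - y); a descent
   F l < F k with r < k < l is then a 231 pattern of F2 at the positions
   a + (M - l) < a + (M - k) < a + (M - r), the last one with F2-value a. *)
Lemma hi_increasing k l : r < k -> k < l -> l <= M -> F k < F l.
Proof.
move=> rk kl lM; have MN := M_lt_N; have ar := a_lt_r; have long := lo_longer_than_hi.
apply: ltF_by_contra; try lia; move=> Flk.
have preimage y : r <= y <= M -> F (a + (M - y)) = y by move=> yH; rewrite lo_shape; lia.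
have FlB := block_stable (x := l) ltac:(lia).
have : F l != F r by apply: F_neq; lia.
rewrite Fr_eq_a => Fl_neq_a.
apply: (F2_231 (i := a + (M - l)) (j := a + (M - k)) (k := a + (M - r))); try lia;
  by rewrite ?preimage ?Fr_eq_a; lia.
Qed.

Lemma hi_shape x : r <= x <= M -> F x = a + (x - r).
Proof.
move=> xH; have MN := M_lt_N; have ar := a_lt_r.
apply: (@increasing_interval_translation F r M.+1 a); try lia.
  move=> i j ri ij jM; case: (ltngtP r i) ri => // [ri _ | e _]; last subst i.
    by apply: hi_increasing; lia.
  have : F j != F r by apply: F_neq; lia.
  by rewrite Fr_eq_a; have := block_stable (x := j) ltac:(lia); lia.
move=> i ri iM; have /andP [aFi FiM] := block_stable (x := i) ltac:(lia).
rewrite aFi /=; rewrite ltnNge; apply/negP => big.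
have /lo_shape : a <= M + a - F i < r by lia.
rewrite (_ : M + a - (M + a - F i) = F i); last by lia.
by move/esym/F_inj; have := MN; lia.
Qed.

Lemma exists_vshape :
  exists a' e M', [/\ a' + e.*2 < M', M' < N & forall i, i < N -> F i = vshape a' e M' i].
Proof.
have ar := a_lt_r; have rM := r_le_M; have long := lo_longer_than_hi.
exists a, (M - r), M; split; [lia | exact: M_lt_N | move=> i iN].
rewrite /vshape (_ : M - (M - r) = r); last by lia.
case: ifP => [/F_fix_lt_a // | /negbT ia].
case: ifP => [ir | /negbT ri]; first by rewrite lo_shape; lia.
case: ifP => [iM | /negbT Mi]; last by apply: beyond_block_fixed; lia.
by rewrite hi_shape; lia.
Qed.

End AvoiderShape.

Lemma avoider_id_or_vshape N (F : nat -> nat) :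
  (forall x, x < N -> F x < N) ->
  (forall x y, x < N -> y < N -> F x = F y -> x = y) ->
  (forall v, v < N -> exists2 x, x < N & F x = v) ->
  avoids231_on N F -> avoids2143_on N F -> avoids231_on N (fun i => F (F i)) ->
  (forall i, i < N -> F i = i) \/
  exists a e M, [/\ a + e.*2 < M, M < N & forall i, i < N -> F i = vshape a e M i].
Proof.
move=> F_lt F_inj F_surj F_231 F_2143 F2_231.
have [i0 Fi0 | fixed] := pickP (fun i : 'I_N => F i != i); last first.
  by left => i iN; apply/eqP/negbFE/(fixed (Ordinal iN)).
right; have moved_ex : exists i, (i < N) && (F i != i).
  by exists i0; rewrite ltn_ord.
case: (ex_minnP moved_ex) => a /andP [a_lt_N Fa_neq_a] a_min.
have F_fix_lt_a : forall i, i < a -> F i = i.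
  move=> i ia; apply/eqP; apply: contraTT (ia) => Fi_neq; rewrite -leqNgt.
  by apply: a_min; rewrite Fi_neq andbT; lia.
have [r r_lt_N Fr_eq_a] := F_surj a a_lt_N.
exact: (exists_vshape F_lt F_inj F_surj F_231 F_2143 F2_231
  a_lt_N F_fix_lt_a Fa_neq_a (erefl (F a)) r_lt_N Fr_eq_a).
Qed.

Definition n_admissible_at (M : nat) := \sum_(0 <= e < M.+1) (M - e.*2).
Definition n_admissible (n : nat) := \sum_(0 <= M < n) n_admissible_at M.

Lemma sum_ord_lt n c : \sum_(i < n) (i < c) = minn c n.
Proof.
elim: n => [|n IH]; first by rewrite big_ord0; lia.
by rewrite big_ord_recr /= IH; case: (ltnP n c); lia.
Qed.

Lemma card_admissible n :
  #|[set t : 'I_n * ('I_n * 'I_n) | t.2.2 + t.2.1.*2 < t.1]| = n_admissible n.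
Proof.
rewrite -sum1_card big_mkcond /=.
transitivity (\sum_(M < n) \sum_(ea : 'I_n * 'I_n) ((ea.2 + ea.1.*2 < M) : nat)).
  by rewrite pair_big /=; apply: eq_bigr => -[M ea] _; rewrite inE /=; case: ltnP.
rewrite /n_admissible big_mkord; apply: eq_bigr => M _.
rewrite -(pair_big xpredT xpredT (fun e a : 'I_n => ((a + e.*2 < M) : nat))) /=.
rewrite /n_admissible_at big_mkord (big_ord_widen n (fun e => M - e.*2)); last first.
  by have := ltn_ord M; lia.
rewrite [in RHS]big_mkcond; apply: eq_bigr => e _.
rewrite (eq_bigr (fun a : 'I_n => (a < M - e.*2) : nat)); last first.
  by move=> a _; rewrite ltn_subRL addnC.
by rewrite sum_ord_lt; case: ifP; have := ltn_ord M; lia.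
Qed.

Lemma n_admissible_atSS M : n_admissible_at M.+2 = n_admissible_at M + M.+2.
Proof.
rewrite /n_admissible_at big_nat_recl // [\sum_(0 <= i < M.+2) _]big_nat_recr //=.
by rewrite (_ : M.+2 - (M.+2).*2 = 0) ?addn0 1?addnC //; lia.
Qed.

Lemma n_admissible_at_even t : n_admissible_at t.*2 = t * t.+1.
Proof.
elim: t => [|t IH]; first by rewrite /n_admissible_at big_nat1.
by rewrite doubleS n_admissible_atSS IH; lia.
Qed.

Lemma n_admissible_at_odd t : n_admissible_at t.*2.+1 = t.+1 * t.+1.
Proof.
elim: t => [|t IH]; first by rewrite /n_admissible_at !big_nat_recr //= big_geq.
by rewrite doubleS n_admissible_atSS IH; lia.
Qed.

Lemma n_admissibleS n : n_admissible n.+1 = n_admissible n + n_admissible_at n.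
Proof. by rewrite /n_admissible big_nat_recr. Qed.

Lemma n_admissible_even k : 6 * n_admissible k.*2 = 4 * k ^ 3 + 3 * k ^ 2 - k.
Proof.
rewrite !expnS expn0 !muln1; elim: k => [|k IH]; first by rewrite /n_admissible big_geq.
by rewrite doubleS !n_admissibleS n_admissible_at_even n_admissible_at_odd; nia.
Qed.

Lemma n_admissible_odd k : 6 * n_admissible k.*2.+1 = 4 * k ^ 3 + 9 * k ^ 2 + 5 * k.
Proof.
have := n_admissible_even k; rewrite n_admissibleS n_admissible_at_even !expnS expn0 !muln1.
nia.
Qed.

Lemma contains3E n (p : 'S_n) x y z :
  contains p [:: x; y; z] =
  [exists i : 'I_n, exists j : 'I_n, exists k : 'I_n,
    [&& i < j, j < k, (p j < p i) == (y < x), (p k < p i) == (z < x)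
      & (p k < p j) == (z < y)]].
Proof.
apply/existsP/existsP.
- move=> [idx /forallP idxP].
  have pairP (s t : 'I_3) := implyP (forallP (idxP s) t).
  pose o0 := @Ordinal 3 0 isT; pose o1 := @Ordinal 3 1 isT; pose o2 := @Ordinal 3 2 isT.
  exists (idx o0); apply/existsP; exists (idx o1); apply/existsP; exists (idx o2).
  case/andP: (pairP o0 o1 isT) => -> ->; case/andP: (pairP o0 o2 isT) => _ ->.
  by case/andP: (pairP o1 o2 isT) => -> ->.
- move=> [i /existsP [j /existsP [k /and5P [ij jk e1 e2 e3]]]].
  exists [ffun s : 'I_3 => nth i [:: i; j; k] s].
  apply/forallP => s; apply/forallP => t; apply/implyP => st; rewrite !ffunE.
  case: s st => [[|[|[|s]]] hs] //=; case: t => [[|[|[|t]]] ht] //= _;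
  by rewrite ?ij ?jk ?e1 ?e2 ?e3 ?(ltn_trans ij jk).
Qed.

Lemma contains4E n (p : 'S_n) x y z w :
  contains p [:: x; y; z; w] =
  [exists i : 'I_n, exists j : 'I_n, exists k : 'I_n, exists l : 'I_n,
    [&& i < j, j < k, k < l,
      (p j < p i) == (y < x), (p k < p i) == (z < x), (p l < p i) == (w < x),
      (p k < p j) == (z < y), (p l < p j) == (w < y)
      & (p l < p k) == (w < z)]].
Proof.
apply/existsP/existsP.
- move=> [idx /forallP idxP].
  have pairP (s t : 'I_4) := implyP (forallP (idxP s) t).
  pose o0 := @Ordinal 4 0 isT; pose o1 := @Ordinal 4 1 isT.
  pose o2 := @Ordinal 4 2 isT; pose o3 := @Ordinal 4 3 isT.
  exists (idx o0); apply/existsP; exists (idx o1); apply/existsP.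
  exists (idx o2); apply/existsP; exists (idx o3).
  case/andP: (pairP o0 o1 isT) => -> ->; case/andP: (pairP o0 o2 isT) => _ ->.
  case/andP: (pairP o0 o3 isT) => _ ->; case/andP: (pairP o1 o2 isT) => -> ->.
  case/andP: (pairP o1 o3 isT) => _ ->.
  by case/andP: (pairP o2 o3 isT) => -> ->.
- move=> [i /existsP [j /existsP [k /existsP [l]]]].
  move=> /and5P [ij jk kl e1 /and5P [e2 e3 e4 e5 e6]].
  exists [ffun s : 'I_4 => nth i [:: i; j; k; l] s].
  have ik := ltn_trans ij jk; have jl := ltn_trans jk kl; have il := ltn_trans ik kl.
  apply/forallP => s; apply/forallP => t; apply/implyP => st; rewrite !ffunE.
  case: s st => [[|[|[|[|s]]]] hs] //=; case: t => [[|[|[|[|t]]]] ht] //= _;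
  by rewrite ?ij ?jk ?kl ?ik ?jl ?il ?e1 ?e2 ?e3 ?e4 ?e5 ?e6.
Qed.

Lemma perm_val_neq n (p : 'S_n) (i j : 'I_n) : i < j -> (p i : nat) != p j.
Proof. by move=> ij; apply: contraTneq ij => /val_inj /perm_inj ->; rewrite ltnn. Qed.

Lemma contains231_inv n (p : 'S_n) :
  contains p^-1 [:: 2; 3; 1] = contains p [:: 3; 1; 2].
Proof.
rewrite !contains3E; apply/existsP/existsP => -[i /existsP [j /existsP [k]]].
all: rewrite /= !eqbF_neg !eqb_id -!leqNgt => /and5P [ij jk e1 e2 e3].
- have n1 := perm_val_neq (p^-1)%g ij.
  exists ((p^-1)%g k); apply/existsP; exists ((p^-1)%g i); apply/existsP; exists ((p^-1)%g j).
  by rewrite !permKV /= !eqbF_neg !eqb_id -!leqNgt; lia.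
- have n1 := perm_val_neq p jk.
  exists (p j); apply/existsP; exists (p k); apply/existsP; exists (p i).
  by rewrite !permK /= !eqbF_neg !eqb_id -!leqNgt; lia.
Qed.

Lemma contains2143_inv n (p : 'S_n) :
  contains p [:: 2; 1; 4; 3] -> contains p^-1 [:: 2; 1; 4; 3].
Proof.
rewrite !contains4E => /existsP [i /existsP [j /existsP [k /existsP [l]]]].
rewrite /= !eqbF_neg !eqb_id -!leqNgt => /and5P [ij jk kl e1 /and5P [e2 e3 e4 e5 e6]].
have n1 := perm_val_neq p ij; have n2 := perm_val_neq p kl.
have n3 := perm_val_neq p (ltn_trans ij (ltn_trans jk kl)).
apply/existsP; exists (p j); apply/existsP; exists (p i); apply/existsP; exists (p l).
apply/existsP; exists (p k).
by rewrite !permK /= !eqbF_neg !eqb_id -!leqNgt; lia.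
Qed.

(* Inversion exchanges 231 and 312, fixes 2143 and commutes with squaring. *)
Lemma c_count_inv n :
  c_count n [:: 2; 3; 1] [:: 2; 1; 4; 3] [:: 2; 3; 1] =
  c_count n [:: 3; 1; 2] [:: 2; 1; 4; 3] [:: 3; 1; 2].
Proof.
rewrite /c_count -(card_preimset _ (@invg_inj _)).
apply: eq_card => p; rewrite !inE /avoids -invMg !contains231_inv.
have -> : contains p^-1 [:: 2; 1; 4; 3] = contains p [:: 2; 1; 4; 3].
  by apply/idP/idP => [/contains2143_inv | /contains2143_inv //]; rewrite invgK.
by [].
Qed.

Section PermAsFunction.
Variable n : nat.
Local Notation N := n.+1.

Definition pfun (p : 'S_N) (i : nat) : nat := p (inord i).

Lemma pfun_ord (p : 'S_N) (i : 'I_N) : pfun p i = p i.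
Proof. by rewrite /pfun inord_val. Qed.

Lemma pfun_lt (p : 'S_N) x : x < N -> pfun p x < N.
Proof. by move=> _; apply: ltn_ord. Qed.

Lemma pfun_inj (p : 'S_N) x y : x < N -> y < N -> pfun p x = pfun p y -> x = y.
Proof. by move=> xN yN /val_inj /perm_inj /(congr1 val); rewrite /= !inordK. Qed.

Lemma pfun_surj (p : 'S_N) v : v < N -> exists2 x, x < N & pfun p x = v.
Proof.
by move=> vN; exists ((p^-1)%g (inord v)); rewrite ?ltn_ord // pfun_ord permKV inordK.
Qed.

Lemma pfunM (p q : 'S_N) i : pfun (p * q)%g i = pfun q (pfun p i).
Proof. by rewrite /pfun permM inord_val. Qed.

Lemma pfun1 i : i < N -> pfun 1%g i = i.
Proof. by move=> iN; rewrite /pfun perm1 inordK. Qed.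

Lemma avoids231_onP (p : 'S_N) :
  avoids p [:: 2; 3; 1] <-> avoids231_on N (pfun p).
Proof.
rewrite /avoids contains3E; split.
- move=> /existsP noP i j k ij jk kN Fki Fij; apply: noP.
  exists (inord i); apply/existsP; exists (inord j); apply/existsP; exists (inord k).
  by rewrite /= !eqbF_neg !eqb_id -!leqNgt !inordK; rewrite /pfun in Fki Fij; lia.
- move=> avP; apply/existsP => -[i /existsP [j /existsP [k]]].
  rewrite /= !eqbF_neg !eqb_id -!leqNgt => /and5P [ij jk e1 e2 e3].
  have nij := perm_val_neq p ij.
  by apply: (avP i j k) => //; rewrite ?pfun_ord; lia.
Qed.

Lemma avoids2143_onP (p : 'S_N) :
  avoids p [:: 2; 1; 4; 3] <-> avoids2143_on N (pfun p).
Proof.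
rewrite /avoids contains4E; split.
- move=> /existsP noP i j k l ij jk kl lN Fji Fil Flk; apply: noP.
  exists (inord i); apply/existsP; exists (inord j); apply/existsP; exists (inord k).
  apply/existsP; exists (inord l).
  by rewrite /= !eqbF_neg !eqb_id -!leqNgt !inordK; rewrite /pfun in Fji Fil Flk; lia.
- move=> avP; apply/existsP => -[i /existsP [j /existsP [k /existsP [l]]]].
  rewrite /= !eqbF_neg !eqb_id -!leqNgt.
  move=> /and5P [ij jk kl e1 /and5P [e2 e3 e4 e5 e6]].
  have nil := perm_val_neq p (ltn_trans ij (ltn_trans jk kl)).
  by apply: (avP i j k l) => //; rewrite ?pfun_ord; lia.
Qed.

End PermAsFunction.

Section Counting.
Variable n : nat.
Local Notation N := n.+1.
Local Notation param := ('I_N * ('I_N * 'I_N))%type.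

Definition admissible : {set param} := [set t : param | t.2.2 + t.2.1.*2 < t.1].

(* Outside [admissible] the identity is used, so that [vperm] is total. *)
Definition vshape_at (t : param) (i : nat) : nat :=
  if t \in admissible then vshape t.2.2 t.2.1 t.1 i else i.

Lemma vshape_at_lt t i : i < N -> vshape_at t i < N.
Proof. by rewrite /vshape_at inE; case: ifP => // adm; apply: vshape_lt. Qed.

Lemma vshape_at_inj t : injective (fun i : 'I_N => inord (vshape_at t i) : 'I_N).
Proof.
move=> i j /(congr1 val); rewrite /= !inordK ?vshape_at_lt // => e; apply/val_inj.
by move: e; rewrite /vshape_at inE; case: ifP => // adm; apply: vshape_inj.
Qed.

Definition vperm (t : param) : 'S_N := perm (@vshape_at_inj t).

Lemma pfun_vperm t i : t \in admissible -> i < N ->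
  pfun (vperm t) i = vshape t.2.2 t.2.1 t.1 i.
Proof.
by move=> adm iN; rewrite /pfun permE /= (inordK iN) inordK ?vshape_at_lt // /vshape_at adm.
Qed.

Definition avoiders : {set 'S_N} := [set p | [&& avoids p [:: 2; 3; 1],
  avoids p [:: 2; 1; 4; 3] & avoids (p * p)%g [:: 2; 3; 1]]].

Lemma avoiders_vperm p :
  p \in avoiders -> p = 1%g \/ exists2 t, t \in admissible & p = vperm t.
Proof.
rewrite inE => /and3P [/avoids231_onP p231 /avoids2143_onP p2143 /avoids231_onP p2_231].
have pp231 : avoids231_on N (fun i => pfun p (pfun p i)).
  by apply: eq_avoids231_on p2_231 => i _; rewrite pfunM.
have [id_p | [a [e [M [adm MN shape]]]]] :=
  avoider_id_or_vshape (@pfun_lt n p) (@pfun_inj n p) (@pfun_surj n p) p231 p2143 pp231.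
  by left; apply/permP => i; apply/ord_inj; rewrite perm1 -pfun_ord id_p.
right; exists (inord M, (inord e, inord a)); first by rewrite inE /= !inordK; lia.
apply/permP => i; apply/ord_inj.
by rewrite -!pfun_ord pfun_vperm ?inE /= ?inordK ?shape //; lia.
Qed.

Lemma one_avoiders : 1%g \in avoiders.
Proof.
have id231 : avoids231_on N id by move=> i j k /=; lia.
have id2143 : avoids2143_on N id by move=> i j k l /=; lia.
have p231 : avoids (1%g : 'S_N) [:: 2; 3; 1].
  by apply/avoids231_onP; apply: eq_avoids231_on (@pfun1 n) id231.
rewrite inE mulg1 p231 andbT; apply/avoids2143_onP.
exact: eq_avoids2143_on (@pfun1 n) id2143.
Qed.

Lemma vperm_avoiders t : t \in admissible -> vperm t \in avoiders.
Proof.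
move=> adm; have adm' := adm; rewrite inE in adm'; have MN := ltn_ord t.1.
have shape := pfun_vperm adm.
rewrite inE; apply/and3P; split.
- by apply/avoids231_onP; apply: eq_avoids231_on shape (vshape_avoids231 adm' MN).
- by apply/avoids2143_onP; apply: eq_avoids2143_on shape (vshape_avoids2143 adm' MN).
- apply/avoids231_onP; apply: eq_avoids231_on (vshape_sq_avoids231 adm' MN) => i iN.
  by rewrite pfunM !shape ?vshape_lt.
Qed.

Lemma avoidersE : avoiders = 1%g |: vperm @: admissible.
Proof.
apply/setP => p; rewrite in_setU1; apply/idP/idP.
  by move/avoiders_vperm => [-> | [t adm ->]]; rewrite ?eqxx ?imset_f ?orbT.
by case/orP => [/eqP -> | /imsetP [t adm ->]]; [exact: one_avoiders | exact: vperm_avoiders].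
Qed.

Lemma one_notin_vperm : 1%g \notin vperm @: admissible.
Proof.
apply/imsetP => -[t adm one_t]; have := pfun_vperm adm (ltn_ord t.2.2).
rewrite -one_t pfun1 ?ltn_ord //; move: adm; rewrite inE.
case: t {one_t} => [M [e a]] /= adm; rewrite vshape_dec ?ltn_ord //; lia.
Qed.

(* a is the first moved point, M its image, and M - e the position of a. *)
Lemma vperm_inj : {in admissible &, injective vperm}.
Proof.
move=> [M1 [e1 a1]] [M2 [e2 a2]] adm1 adm2 /(congr1 (@pfun n)) eq12.
have {}eq12 i : i < N -> vshape a1 e1 M1 i = vshape a2 e2 M2 i.
  by move=> iN; rewrite -(pfun_vperm adm1 iN) -(pfun_vperm adm2 iN) eq12.
move: adm1 adm2; rewrite !inE /= => adm1 adm2.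
have M1N := ltn_ord M1; have M2N := ltn_ord M2.
have ea : a1 = a2 :> nat.
  case: (ltngtP a1 a2) => // lt_a.
  - by have := eq12 a1 ltac:(lia); rewrite (vshape_dec adm1) ?vshape_id_lt; lia.
  - by have := eq12 a2 ltac:(lia); rewrite (vshape_dec adm2 (i := a2)) ?vshape_id_lt; lia.
have eM : M1 = M2 :> nat.
  by have := eq12 a1 ltac:(lia); rewrite (vshape_dec adm1) ?(vshape_dec adm2); lia.
have ee : e1 = e2 :> nat.
  case: (ltngtP e1 e2) => // lt_e.
  - have := eq12 (M1 - e1) ltac:(lia).
    by rewrite (vshape_inc adm1) ?(vshape_inc adm2); lia.
  - have := eq12 (M2 - e2) ltac:(lia).
    by rewrite (vshape_inc adm1 (i := M2 - e2)) ?(vshape_inc adm2); lia.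
by rewrite (val_inj ea) (val_inj eM) (val_inj ee).
Qed.

Lemma card_avoiders :
  c_count N [:: 2; 3; 1] [:: 2; 1; 4; 3] [:: 2; 3; 1] = (n_admissible N).+1.
Proof.
rewrite /c_count -/avoiders avoidersE cardsU1 one_notin_vperm card_in_imset.
  by rewrite card_admissible.
exact: vperm_inj.
Qed.
End Counting.

Theorem theorem4p4 (n : nat) : 1 <= n ->
  c_count n [:: 2; 3; 1] [:: 2; 1; 4; 3] [:: 2; 3; 1] =
    c_count n [:: 3; 1; 2] [:: 2; 1; 4; 3] [:: 3; 1; 2] /\
  (forall k : nat, n = k.*2 ->
     c_count n [:: 2; 3; 1] [:: 2; 1; 4; 3] [:: 2; 3; 1] =
       (4 * k ^ 3 + 3 * k ^ 2 - k) %/ 6 + 1) /\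
  (forall k : nat, n = k.*2.+1 ->
     c_count n [:: 2; 3; 1] [:: 2; 1; 4; 3] [:: 2; 3; 1] =
       (4 * k ^ 3 + 9 * k ^ 2 + 5 * k) %/ 6 + 1).
Proof.
case: n => [// | n] _; split; first exact: c_count_inv.
split=> k nk; rewrite card_avoiders nk -addn1.
- by rewrite -n_admissible_even mulKn.
- by rewrite -n_admissible_odd mulKn.
Qed.
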